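(* Let $n\ge 2$ and let $M$ be a uniformly random $n\times n$ matrix with independent entries uniform on $\{-1,+1\}$. Let $R_{11}$ be the event that two distinct columns of $M$ are equal up to sign, and $L_{11}$ the event that two distinct rows of $M$ are equal up to sign. Then $$\mathbb{P}(R_{11}\setminus L_{11})\ \ge\ 2\binom n2\Big(\frac12\Big)^n-\Big(12\binom n2^2-4\binom n2\Big)\Big(\frac14\Big)^n,$$ and, as $n\to\infty$, $$\mathbb{P}(R_{11}\setminus L_{11})=\mathbb{P}(R_{11})-8\binom n2^2\Big(\frac14\Big)^n+O\big(n^6 2^{-3n}\big).$$
   Context: Vectors $x,y\in\{-1,1\}^n$ are equal up to sign if $x=\pm y$. Equivalently, $R_{11}$ (resp. $L_{11}$) is the event that $M$ has a right null vector $Mv=0$ (resp. left null vector $vM=0$) of the form $e_i\pm e_j$, $i\ne j$. *)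

From HB Require Import structures.
From mathcomp Require Import all_boot all_order all_algebra.
Set Implicit Arguments. Unset Strict Implicit. Unset Printing Implicit Defensive.
Import Order.TTheory GRing.Theory Num.Theory.
Local Open Scope ring_scope.

(* A random +-1 matrix is encoded as M : 'M[bool]_n, entry b standing for pm b. *)
Definition pm (b : bool) : int := if b then 1 else -1.

Definition cols_eq_up_to_sign n (M : 'M[bool]_n) (i j : 'I_n) : bool :=
  [forall k, pm (M k i) == pm (M k j)] || [forall k, pm (M k i) == - pm (M k j)].

Definition rows_eq_up_to_sign n (M : 'M[bool]_n) (i j : 'I_n) : bool :=
  [forall k, pm (M i k) == pm (M j k)] || [forall k, pm (M i k) == - pm (M j k)].

Definition R11 n (M : 'M[bool]_n) : bool :=
  [exists i, exists j, (i != j) && cols_eq_up_to_sign M i j].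
Definition L11 n (M : 'M[bool]_n) : bool :=
  [exists i, exists j, (i != j) && rows_eq_up_to_sign M i j].

Definition prob n (E : pred 'M[bool]_n) : rat :=
  #|[set M | E M]|%:R / (2 ^ (n * n))%:R.

From HB Require Import structures.
From mathcomp Require Import all_boot all_order all_algebra.
From mathcomp Require Import zify ring lra.
Set Implicit Arguments. Unset Strict Implicit. Unset Printing Implicit Defensive.
Import Order.TTheory GRing.Theory Num.Theory.

(* Write N = 2^(n*n) for the number of sign matrices,
   Y = 2^n, and C = 'C(n, 2) = #|P| for the set P of pairs (i, j), i < j.
   For p in P let A_p (resp. B_p) be the set of matrices whose columns
   (resp. rows) p.1 and p.2 agree up to sign, so that R11 = \bigcup_p A_p
   and L11 = \bigcup_p B_p.  Four cardinality estimates are proved by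
   exhibiting a set S of entries that is determined by the entries outside
   S on the event (upper bounds) or that can be filled in for any choice of
   the outside entries (lower bounds):
     |A_p| >= 2N/Y,  |A_p & A_q| <= 4N/Y^2,  |A_p & B_r| = 8N/Y^2,
     |A_p & A_q & B_r| <= 32N/Y^3            (p != q).
   They are combined through pointwise Bonferroni inequalities for the counts
   a(M) = #{p | M \in A_p} and b(M) = #{p | M \in B_p}, summed over all M.
   This gives |R11| >= 2CN/Y - 2C(C-1)N/Y^2 and
   |#(R11 & L11) - 8C^2N/Y^2| <= 32C^3N/Y^3; the theorem follows because
   R11 \ L11 = R11 minus R11 & L11.  Transposition exchanges rows and
   columns, so every statement about B is deduced from one about A. *)

Lemma sum_indicator (T : finType) (X : {set T}) : \sum_x ((x \in X) : nat) = #|X|.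
Proof.
by rewrite -sum1_card [RHS]big_mkcond /=; apply: eq_bigr => x _; case: (x \in X).
Qed.

Lemma card_split (T : finType) (E F : pred T) :
  #|[set x | E x]| = #|[set x | E x && ~~ F x]| + #|[set x | E x && F x]|.
Proof.
rewrite -!sum_indicator -big_split; apply: eq_bigr => x _; rewrite !inE.
by case: (E x); case: (F x).
Qed.

Lemma count_above (i m : nat) : \sum_(0 <= j < m) ((i < j)%N : nat) = m - i.+1.
Proof.
elim: m => [|m IH]; first by rewrite big_geq.
by rewrite big_nat_recr //= IH; case: (ltnP i m) => /= H; lia.
Qed.

Lemma card_increasing_pairs (n : nat) :
  #|[set p : 'I_n * 'I_n | (p.1 < p.2)%N]| = 'C(n, 2).
Proof.
rewrite -sum_indicator.
under eq_bigr => p _ do rewrite inE.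
rewrite -(pair_bigA _ (fun i j : 'I_n => ((i < j)%N : nat))) /=.
rewrite -bin2_sum big_nat_rev /= big_mkord; apply: eq_bigr => i _.
by rewrite -(big_mkord predT (fun j => ((i < j)%N : nat))) count_above add0n.
Qed.

Lemma count_square (I : finType) (X : {set I}) (x : I -> bool) :
  (\sum_(p in X) (x p : nat)) * (\sum_(p in X) (x p : nat)) =
  \sum_(p in X) (x p : nat) + \sum_(p in X) \sum_(q in X :\ p) ((x p && x q) : nat).
Proof.
rewrite big_distrl -big_split; apply: eq_bigr => p pX /=.
rewrite (big_setD1 p pX) /= mulnDr big_distrr /=; congr (_ + _); first by case: (x p).
by apply: eq_bigr => q _; case: (x p); case: (x q).
Qed.

Lemma count_pos (I : finType) (X : {set I}) (x : I -> bool) :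
  (0 < \sum_(p in X) (x p : nat))%N = [exists p in X, x p].
Proof.
rewrite lt0n sum_nat_eq0 negb_forall; apply: eq_existsb => p.
by case: (p \in X); case: (x p).
Qed.

(* Pointwise Bonferroni inequalities for counts a and b whose numbers of
   ordered pairs of distinct elements are c = a(a-1) and d = b(b-1). *)
Lemma bonferroni_union (a c : nat) :
  a * a = a + c -> (2 * a <= 2 * (0 < a) + c)%N.
Proof. by case: a => [|[|a]] /=; nia. Qed.

Lemma bonferroni_intersection (a b c d : nat) : a * a = a + c -> b * b = b + d ->
  (2 * (a * b) <= 2 * ((0 < a) && (0 < b)) + c * b + d * a)%N.
Proof. by case: a => [|[|[|a]]]; case: b => [|[|[|b]]] /=; nia. Qed.

Lemma indicator_le_mul (a b : nat) : (((0 < a) && (0 < b) : nat) <= a * b)%N.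
Proof. by case: a => [|a]; case: b => [|b]; rewrite ?muln0. Qed.

(* The arithmetic combining the summed estimates, with N = 2^(n*n),
   Y = 2^n, C the number of pairs, x = |R11|, y = |R11 & L11|, z = x - y. *)
Lemma first_order_arith (C N Y SA ScA SAB x y z : nat) :
  (C * (2 * N) <= SA * Y -> ScA * (Y * Y) <= C * ((C - 1) * (4 * N)) ->
   SAB * (Y * Y) = C * (C * (8 * N)) ->
   2 * SA <= 2 * x + ScA -> y <= SAB -> x = z + y ->
   2 * C * N * Y + 4 * C * N <= z * (Y * Y) + 12 * C * C * N)%N.
Proof.
move=> hSA hScA hSAB hx hy hxy; subst x.
have := leq_mul hx (leqnn (Y * Y)); have := leq_mul hSA (leqnn Y).
have := leq_mul hy (leqnn (Y * Y)).
have : (C * N <= C * C * N)%N by case: C {hSA hScA hSAB} => // C; rewrite leq_mul2r leq_pmulr ?orbT.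
nia.
Qed.

Lemma second_order_arith (C N Y SAB T y : nat) :
  (SAB <= y + T -> T * (Y * Y * Y) <= C * ((C - 1) * (C * (32 * N))) ->
   SAB * (Y * Y) = C * (C * (8 * N)) ->
   8 * C * C * N * Y <= y * (Y * Y * Y) + 32 * C * C * C * N)%N.
Proof.
move=> hSAB hT eqSAB.
have : (C * ((C - 1) * (C * (32 * N))) <= 32 * C * C * C * N)%N.
  by rewrite [X in (_ <= X)%N](_ : _ = C * (C * (C * (32 * N))))%N ?leq_mul ?leq_subr //; ring.
have := leq_mul hSAB (leqnn (Y * Y * Y)).
nia.
Qed.

Lemma pm_eq (x y : bool) : (pm x == pm y) = (x == y).
Proof. by case: x; case: y. Qed.

Lemma pm_eqN (x y : bool) : (pm x == (- pm y)%R) = (x == ~~ y).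
Proof. by case: x; case: y. Qed.

Lemma addb_solve (x y z : bool) : x (+) y = z -> x = y (+) z.
Proof. by case: x; case: y; case: z. Qed.

Section SignMatrices.
Variable n : nat.
Local Notation pos := ('I_n * 'I_n)%type.
Local Notation mat := 'M[bool]_n.

Lemma cols_xor_const (M : mat) i j : cols_eq_up_to_sign M i j ->
  forall k k', M k i (+) M k j = M k' i (+) M k' j.
Proof.
case/orP => /forallP H k k'; have := H k; have := H k';
  rewrite ?pm_eq ?pm_eqN => /eqP -> /eqP ->; by case: (M k j); case: (M k' j).
Qed.

Lemma cols_of_xor_const (M : mat) i j c :
  (forall k, M k i (+) M k j = c) -> cols_eq_up_to_sign M i j.
Proof.
move=> H; apply/orP; case: c H => H; [right | left]; apply/forallP => k;
  rewrite ?pm_eq ?pm_eqN; have := H k; by case: (M k i); case: (M k j).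
Qed.

Lemma cols_sym (M : mat) i j : cols_eq_up_to_sign M i j = cols_eq_up_to_sign M j i.
Proof.
apply/idP/idP => /cols_xor_const H; apply: (@cols_of_xor_const _ _ _ (M i j (+) M i i)) => k;
  have := H k i; by case: (M k i); case: (M k j); case: (M i i); case: (M i j).
Qed.

Lemma rows_trmx (M : mat) a b : rows_eq_up_to_sign M a b = cols_eq_up_to_sign M^T a b.
Proof.
rewrite /rows_eq_up_to_sign /cols_eq_up_to_sign.
by congr orb; apply: eq_forallb => k; rewrite !mxE.
Qed.

Lemma rows_xor_const (M : mat) a b : rows_eq_up_to_sign M a b ->
  forall l l', M a l (+) M b l = M a l' (+) M b l'.
Proof. by rewrite rows_trmx => /cols_xor_const H l l'; have := H l l'; rewrite !mxE. Qed.

Lemma rows_of_xor_const (M : mat) a b c :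
  (forall l, M a l (+) M b l = c) -> rows_eq_up_to_sign M a b.
Proof. by move=> H; rewrite rows_trmx; apply: (cols_of_xor_const (c := c)) => l; rewrite !mxE. Qed.

Lemma L11_trmx (M : mat) : L11 M = R11 M^T.
Proof.
by apply: eq_existsb => i; apply: eq_existsb => j; rewrite rows_trmx.
Qed.

Definition restrict (S : {set pos}) (M : mat) : {ffun pos -> bool} :=
  [ffun x => if x \in S then false else M x.1 x.2].

Lemma card_off (S : {set pos}) :
  #|pffun_on false (~: S) (@predT bool)| * 2 ^ #|S| = 2 ^ (n * n).
Proof.
by rewrite card_pffun_on card_bool -expnD addnC cardsC card_prod card_ord.
Qed.

Lemma restrict_off S M : restrict S M \in pffun_on false (~: S) (@predT bool).
Proof.
apply/pffun_onP; split => //; apply/subsetP => x.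
by rewrite inE ffunE inE; case: (x \in S).
Qed.

Lemma card_determined (E : {set mat}) (S : {set pos}) :
  {in E &, forall M M' : mat, (forall k l, (k, l) \notin S -> M k l = M' k l) -> M = M'} ->
  (#|E| * 2 ^ #|S| <= 2 ^ (n * n))%N.
Proof.
move=> det; have inj : {in E &, injective (restrict S)}.
  move=> M M' HM HM' eqMM'; apply: det => // k l kS.
  by have := congr1 (fun f : {ffun pos -> bool} => f (k, l)) eqMM'; rewrite !ffunE /= (negbTE kS).
rewrite -(card_in_imset inj) -(card_off S) leq_mul2r; apply/orP; right.
by apply: subset_leq_card; apply/subsetP => _ /imsetP[M _ ->]; apply: restrict_off.
Qed.

Lemma card_extendable (E : {set mat}) (S : {set pos}) (g : {ffun pos -> bool} -> mat) :
  (forall f, g f \in E) -> (forall f k l, (k, l) \notin S -> g f k l = f (k, l)) ->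
  (2 ^ (n * n) <= #|E| * 2 ^ #|S|)%N.
Proof.
move=> gE gS; set D := pffun_on false (~: S) (@predT bool).
have restrictK f : f \in D -> restrict S (g f) = f.
  case/pffun_onP => /subsetP supp _; apply/ffunP => -[k l]; rewrite ffunE /=.
  case: ifP => kS; last by rewrite gS // kS.
  by apply/esym/negbTE/negP => fx; have := supp (k, l); rewrite !inE /= fx kS => /(_ isT).
have inj : {in D &, injective g}.
  by move=> f f' Hf Hf' e; rewrite -(restrictK f Hf) -(restrictK f' Hf') e.
rewrite -(card_off S) leq_mul2r -(card_in_imset inj); apply/orP; right.
by apply: subset_leq_card; apply/subsetP => _ /imsetP[f _ ->].
Qed.

Definition colseg (i : 'I_n) (X : {set 'I_n}) : {set pos} := [set (k, i) | k in X].
Definition rowseg (a : 'I_n) (Y : {set 'I_n}) : {set pos} := [set (a, l) | l in Y].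

Lemma mem_colseg i X k l : ((k, l) \in colseg i X) = (l == i) && (k \in X).
Proof.
by apply/imsetP/andP => [[k' H [-> ->]] | [/eqP -> H]]; [rewrite eqxx | exists k].
Qed.

Lemma mem_rowseg a Y k l : ((k, l) \in rowseg a Y) = (k == a) && (l \in Y).
Proof.
by apply/imsetP/andP => [[l' H [-> ->]] | [/eqP -> H]]; [rewrite eqxx | exists l].
Qed.

Lemma card_colseg i X : #|colseg i X| = #|X|.
Proof. by apply: card_imset => x y [->]. Qed.

Lemma card_rowseg a Y : #|rowseg a Y| = #|Y|.
Proof. by apply: card_imset => x y [->]. Qed.

Lemma card_disjointU (A B : {set pos}) : [disjoint A & B] -> #|A :|: B| = #|A| + #|B|.
Proof. by move=> dAB; apply/eqP; rewrite (leq_card_setU A B).2. Qed.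

Lemma card_setC1 (i : 'I_n) : #|~: [set i]| = n.-1.
Proof. by rewrite cardsC1 card_ord. Qed.

Lemma card_setC2 (a b : 'I_n) : a != b -> #|~: [set a; b]| = n - 2.
Proof. by move=> ab; have := cardsC [set a; b]; rewrite cards2 ab card_ord; lia. Qed.

(* Columns i != j agree up to sign with probability at least 2^(1-n):
   column i off row i is determined by column j and one sign. *)
Lemma card_col_pair_ge (i j : 'I_n) : i != j ->
  (2 ^ (n * n) <= #|[set M : mat | cols_eq_up_to_sign M i j]| * 2 ^ n.-1)%N.
Proof.
move=> ij; have ji : (j == i) = false by apply/negbTE; rewrite eq_sym.
rewrite -(card_setC1 i) -(card_colseg i).
apply: (card_extendable (g := fun f => \matrix_(k, l)
  if (l == i) && (k != i) then f (k, j) (+) (f (i, i) (+) f (i, j)) else f (k, l))%R).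
- move=> f; rewrite inE; apply: (cols_of_xor_const (c := f (i, i) (+) f (i, j))) => k.
  rewrite !mxE ji eqxx /=; have [->|ki] := eqVneq k i => //=.
  by case: (f (k, j)); case: (f (i, i)); case: (f (i, j)).
- by move=> f k l; rewrite mem_colseg in_setC in_set1 mxE => /negbTE ->.
Qed.

(* Two agreements of column pairs {i, j}, {u, v} with u outside {i, j}:
   columns i and u are determined off row i by the other entries. *)
Lemma card_two_col_pairs_le (i j u v : 'I_n) : i != j -> u != i -> u != j -> u != v ->
  (#|[set M : mat | cols_eq_up_to_sign M i j && cols_eq_up_to_sign M u v]|
     * 2 ^ (n.-1 + n.-1) <= 2 ^ (n * n))%N.
Proof.
move=> ij ui uj uv.
have [ji ju iu] : [/\ (j == i) = false, (j == u) = false & (i == u) = false].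
  by split; apply/negbTE; rewrite eq_sym.
set S := colseg i (~: [set i]) :|: colseg u (~: [set i]).
have memS k l : ((k, l) \in S) = ((l == i) || (l == u)) && (k != i).
  by rewrite in_setU !mem_colseg !in_setC1 andb_orl.
have disjS : [disjoint colseg i (~: [set i]) & colseg u (~: [set i])].
  rewrite -setI_eq0; apply/eqP/setP => -[k l]; rewrite !inE !mem_colseg.
  by have [->|_] := eqVneq l i; rewrite ?iu /= ?andbF.
have -> : (n.-1 + n.-1 = #|S|)%N by rewrite card_disjointU // !card_colseg card_setC1.
apply: card_determined => M M'; rewrite !inE => /andP[H1 H2] /andP[H1' H2'] off.
have not_u k l : l != u -> M k l = M' k l.
  move=> lu; have [->|li] := eqVneq l i; last by apply: off; rewrite memS (negbTE lu) (negbTE li).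
  rewrite (addb_solve (cols_xor_const H1 k i)) (addb_solve (cols_xor_const H1' k i)).
  by rewrite !off // memS ?eqxx ?ji ?ju ?iu.
apply/matrixP => k l; have [->|lu] := eqVneq l u; last exact: not_u.
rewrite (addb_solve (cols_xor_const H2 k i)) (addb_solve (cols_xor_const H2' k i)).
by rewrite !(not_u _ v) 1?eq_sym // (off i u) // memS !eqxx andbF.
Qed.

(* For the event "columns i, j and rows a, b agree up to sign", the entries
   of column i off rows a, b and of row a off column j are determined by
   the remaining ones (and can be chosen so that the event holds). *)
Definition fixed_col_row (i j a b : 'I_n) : {set pos} :=
  colseg i (~: [set a; b]) :|: rowseg a (~: [set j]).

Lemma mem_fixed_col_row i j a b k l : ((k, l) \in fixed_col_row i j a b) =
  (l == i) && (k != a) && (k != b) || (k == a) && (l != j).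
Proof. by rewrite in_setU mem_colseg mem_rowseg !inE negb_or andbA. Qed.

Lemma card_fixed_col_row i j a b : a != b ->
  #|fixed_col_row i j a b| = (n - 2 + n.-1)%N.
Proof.
move=> ab; rewrite card_disjointU ?card_colseg ?card_rowseg ?card_setC2 ?card_setC1 //.
rewrite -setI_eq0; apply/eqP/setP => -[k l].
rewrite in_setI mem_colseg mem_rowseg !inE.
by have [->|] := eqVneq k a; rewrite /= ?andbF.
Qed.

Definition col_row_event (i j a b : 'I_n) : {set mat} :=
  [set M : mat | cols_eq_up_to_sign M i j && rows_eq_up_to_sign M a b].

Lemma card_col_row_le (i j a b : 'I_n) : i != j -> a != b ->
  (#|col_row_event i j a b| * 2 ^ (n - 2 + n.-1) <= 2 ^ (n * n))%N.
Proof.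
move=> ij ab; have [ji ba] : (j == i) = false /\ (b == a) = false.
  by split; apply/negbTE; rewrite eq_sym.
rewrite -(card_fixed_col_row i j ab); apply: card_determined.
move=> M M'; rewrite !inE => /andP[H1 H2] /andP[H1' H2'] off.
apply/matrixP => k l; have [->|ka] := eqVneq k a.
  rewrite (addb_solve (rows_xor_const H2 l j)) (addb_solve (rows_xor_const H2' l j)).
  by rewrite !off // mem_fixed_col_row ?eqxx ?ji ?ba /= ?andbF.
have [->|li] := eqVneq l i.
  rewrite (addb_solve (cols_xor_const H1 k b)) (addb_solve (cols_xor_const H1' k b)).
  by rewrite !off // mem_fixed_col_row ?eqxx ?ji ?ba ?(negbTE ka) /= ?andbF.
by rewrite off // mem_fixed_col_row (negbTE ka) (negbTE li).
Qed.

Lemma card_col_row_ge (i j a b : 'I_n) : i != j -> a != b ->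
  (2 ^ (n * n) <= #|col_row_event i j a b| * 2 ^ (n - 2 + n.-1))%N.
Proof.
move=> ij ab; have [ji ba] : (j == i) = false /\ (b == a) = false.
  by split; apply/negbTE; rewrite eq_sym.
rewrite -(card_fixed_col_row i j ab).
apply: (card_extendable (g := fun f => \matrix_(k, l)
   if (k == a) && (l != j) then f (b, l) (+) (f (a, j) (+) f (b, j))
   else if (l == i) && (k != b) then f (k, j) (+) (f (b, i) (+) f (b, j))
   else f (k, l))%R).
- move=> f; rewrite inE; apply/andP; split.
  + apply: (cols_of_xor_const (c := f (b, i) (+) f (b, j))) => k; rewrite !mxE.
    have [->|ka] := eqVneq k a.
      rewrite ij !eqxx ji /=.
      by case: (f (b, i)); case: (f (a, j)); case: (f (b, j)).
    rewrite !eqxx ji /=; have [->|kb] := eqVneq k b => //=.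
    by case: (f (k, j)); case: (f (b, i)); case: (f (b, j)).
  + apply: (rows_of_xor_const (c := f (a, j) (+) f (b, j))) => l; rewrite !mxE.
    rewrite !eqxx ba /= andbF.
    have [->|lj] := eqVneq l j; first by rewrite /= ji.
    by case: (f (b, l)); case: (f (a, j)); case: (f (b, j)).
- move=> f k l; rewrite mem_fixed_col_row mxE.
  have [->|ka] := eqVneq k a; have [->|li] := eqVneq l i; rewrite /= ?andbF ?orbF //.
  + by rewrite ij.
  + by move/negbTE => ->.
  + by move/negbTE => ->.
Qed.

(* Adding a second column agreement {u, v}, u outside {i, j}, also fixes
   column u off rows a, b. *)
Definition fixed_cols_row (i j u a b : 'I_n) : {set pos} :=
  colseg i (~: [set a; b]) :|: colseg u (~: [set a; b]) :|: rowseg a (~: [set j]).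

Lemma mem_fixed_cols_row i j u a b k l : ((k, l) \in fixed_cols_row i j u a b) =
  ((l == i) || (l == u)) && (k != a) && (k != b) || (k == a) && (l != j).
Proof.
by rewrite !in_setU !mem_colseg mem_rowseg !inE !negb_or -andb_orl andbA.
Qed.

Lemma card_fixed_cols_row i j u a b : a != b -> i != u ->
  #|fixed_cols_row i j u a b| = (n - 2 + (n - 2) + n.-1)%N.
Proof.
move=> ab iu.
rewrite card_disjointU ?card_disjointU ?card_colseg ?card_rowseg ?card_setC2 ?card_setC1 //.
  rewrite -setI_eq0; apply/eqP/setP => -[k l]; rewrite in_setI !mem_colseg !inE.
  by have [->|] := eqVneq l i; rewrite /= ?(negbTE iu) ?andbF.
rewrite -setI_eq0; apply/eqP/setP => -[k l].
rewrite in_setI in_setU !mem_colseg mem_rowseg !inE.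
by have [->|] := eqVneq k a; rewrite /= ?andbF.
Qed.

Lemma card_cols_row_le (i j u v a b : 'I_n) :
  i != j -> u != i -> u != j -> u != v -> a != b ->
  (#|[set M : mat | [&& cols_eq_up_to_sign M i j, cols_eq_up_to_sign M u v
                      & rows_eq_up_to_sign M a b]]|
     * 2 ^ (n - 2 + (n - 2) + n.-1) <= 2 ^ (n * n))%N.
Proof.
move=> ij ui uj uv ab.
have [ji ju ba] : [/\ (j == i) = false, (j == u) = false & (b == a) = false].
  by split; apply/negbTE; rewrite eq_sym.
have iu : i != u by rewrite eq_sym.
rewrite -(card_fixed_cols_row j ab iu); apply: card_determined.
move=> M M'; rewrite !inE => /and3P[H1 H2 H3] /and3P[H1' H2' H3'] off.
have row_b l : M b l = M' b l by rewrite off // mem_fixed_cols_row eqxx ba /= !andbF.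
have col_i k : k != a -> M k i = M' k i.
  move=> ka; rewrite (addb_solve (cols_xor_const H1 k b)) (addb_solve (cols_xor_const H1' k b)).
  by rewrite !row_b off // mem_fixed_cols_row ji ju (negbTE ka).
have col_u k : k != a -> M k u = M' k u.
  move=> ka; rewrite (addb_solve (cols_xor_const H2 k b)) (addb_solve (cols_xor_const H2' k b)).
  rewrite !row_b; have [->|vi] := eqVneq v i; first by rewrite col_i.
  by rewrite off // mem_fixed_cols_row (negbTE ka) /= (negbTE vi) (eq_sym v) (negbTE uv).
apply/matrixP => k l; have [->|ka] := eqVneq k a.
  rewrite (addb_solve (rows_xor_const H3 l j)) (addb_solve (rows_xor_const H3' l j)).
  by rewrite !row_b off // mem_fixed_cols_row !eqxx /= andbF.
have [->|li] := eqVneq l i; first exact: col_i.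
have [->|lu] := eqVneq l u; first exact: col_u.
by rewrite off // mem_fixed_cols_row (negbTE ka) (negbTE li) (negbTE lu).
Qed.

End SignMatrices.

Section PairEvents.
Variable n : nat.
Local Notation pos := ('I_n * 'I_n)%type.
Local Notation mat := 'M[bool]_n.

Definition pairs : {set pos} := [set p : pos | (p.1 < p.2)%N].
Definition colev (p : pos) : {set mat} := [set M : mat | cols_eq_up_to_sign M p.1 p.2].
Definition rowev (p : pos) : {set mat} := [set M : mat | rows_eq_up_to_sign M p.1 p.2].

Lemma rowev_trmx p (M : mat) : (M \in rowev p) = (M^T%R \in colev p).
Proof. by rewrite !inE rows_trmx. Qed.

Lemma pair_neq p : p \in pairs -> p.1 != p.2.
Proof. by rewrite inE => lt12; apply: contraTneq lt12 => ->; rewrite ltnn. Qed.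

Lemma pairs_dim p : p \in pairs -> (2 <= n)%N.
Proof. by case: p => -[i ?] [j ?]; rewrite inE /=; lia. Qed.

Lemma expn_pred : (0 < n)%N -> 2 ^ n = (2 * 2 ^ n.-1)%N.
Proof. by move=> n_gt0; rewrite -expnS prednK. Qed.

Lemma expn_sub2 : (2 <= n)%N -> 2 ^ n = (4 * 2 ^ (n - 2))%N.
Proof. by move=> n_ge2; rewrite -[4]/(2 ^ 2) -expnD subnKC. Qed.

Lemma card_colev_ge p : p \in pairs -> (2 * 2 ^ (n * n) <= #|colev p| * 2 ^ n)%N.
Proof.
move=> pP; rewrite (expn_pred (ltnW (pairs_dim pP))) mulnCA leq_mul2l /=.
exact: card_col_pair_ge (pair_neq pP).
Qed.

Lemma other_pair p q : p \in pairs -> q \in pairs -> p != q ->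
  exists u v, [/\ u != p.1, u != p.2, u != v &
                 forall M : mat, (M \in colev q) = cols_eq_up_to_sign M u v].
Proof.
case: p q => i j [k l]; rewrite !inE /= => ij kl pq.
have kl' : k != l by apply: contraTneq kl => ->; rewrite ltnn.
have [/andP[ki kj]|] := boolP ((k != i) && (k != j)).
  by exists k, l; split => // M; rewrite inE.
have [/andP[li lj]|] := boolP ((l != i) && (l != j)).
  by exists l, k; split => //; [rewrite eq_sym | move=> M; rewrite inE cols_sym].
rewrite !negb_and !negbK => /orP[/eqP ki|/eqP kj] /orP[/eqP li|/eqP lj]; subst;
  try (by rewrite ltnn in kl); try lia; by rewrite eqxx in pq.
Qed.

Lemma card_colev2_le p q : p \in pairs -> q \in pairs -> p != q ->
  (#|colev p :&: colev q| * (2 ^ n * 2 ^ n) <= 4 * 2 ^ (n * n))%N.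
Proof.
move=> pP qP pq; have [u [v [u1 u2 uv Aq]]] := other_pair pP qP pq.
have := card_two_col_pairs_le (pair_neq pP) u1 u2 uv.
have -> : [set M : mat | cols_eq_up_to_sign M p.1 p.2 && cols_eq_up_to_sign M u v]
   = colev p :&: colev q by apply/setP => M; rewrite in_setI Aq !inE.
rewrite (expn_pred (ltnW (pairs_dim pP))) expnD.
have -> x y : (x * (2 * y * (2 * y)) = 4 * (x * (y * y)))%N by ring.
by rewrite leq_mul2l.
Qed.

Lemma card_colev_rowev p r : p \in pairs -> r \in pairs ->
  (#|colev p :&: rowev r| * (2 ^ n * 2 ^ n) = 8 * 2 ^ (n * n))%N.
Proof.
move=> pP rP; have n2 := pairs_dim pP.
have -> : colev p :&: rowev r = col_row_event p.1 p.2 r.1 r.2.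
  by apply/setP => M; rewrite in_setI !inE.
have -> : (2 ^ n * 2 ^ n = 8 * 2 ^ (n - 2 + n.-1))%N.
  by rewrite expnD {1}(expn_sub2 n2) (expn_pred (ltnW n2)); ring.
rewrite mulnCA; congr (8 * _); apply/eqP; rewrite eqn_leq.
by rewrite card_col_row_le ?card_col_row_ge ?pair_neq.
Qed.

Lemma card_colev2_rowev_le p q r : p \in pairs -> q \in pairs -> r \in pairs -> p != q ->
  (#|colev p :&: colev q :&: rowev r| * (2 ^ n * 2 ^ n * 2 ^ n) <= 32 * 2 ^ (n * n))%N.
Proof.
move=> pP qP rP pq; have n2 := pairs_dim pP.
have [u [v [u1 u2 uv Aq]]] := other_pair pP qP pq.
have := card_cols_row_le (pair_neq pP) u1 u2 uv (pair_neq rP).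
have -> : [set M : mat | [&& cols_eq_up_to_sign M p.1 p.2, cols_eq_up_to_sign M u v
                           & rows_eq_up_to_sign M r.1 r.2]] = colev p :&: colev q :&: rowev r.
  by apply/setP => M; rewrite !in_setI Aq !inE andbA.
have -> : (2 ^ n * 2 ^ n * 2 ^ n = 32 * 2 ^ (n - 2 + (n - 2) + n.-1))%N.
  by rewrite !expnD {1 2}(expn_sub2 n2) (expn_pred (ltnW n2)); ring.
by rewrite mulnCA leq_mul2l.
Qed.

Definition ncols (M : mat) : nat := \sum_(p in pairs) ((M \in colev p) : nat).
Definition nrows (M : mat) : nat := \sum_(p in pairs) ((M \in rowev p) : nat).
Definition ncols2 (M : mat) : nat :=
  \sum_(p in pairs) \sum_(q in pairs :\ p) (((M \in colev p) && (M \in colev q)) : nat).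
Definition nrows2 (M : mat) : nat :=
  \sum_(p in pairs) \sum_(q in pairs :\ p) (((M \in rowev p) && (M \in rowev q)) : nat).

Lemma nrows_trmx (M : mat) : nrows M = ncols M^T%R.
Proof. by apply: eq_bigr => p _; rewrite rowev_trmx. Qed.

Lemma nrows2_trmx (M : mat) : nrows2 M = ncols2 M^T%R.
Proof. by apply: eq_bigr => p _; apply: eq_bigr => q _; rewrite !rowev_trmx. Qed.

Lemma R11_ncols (M : mat) : R11 M = (0 < ncols M)%N.
Proof.
rewrite /ncols count_pos; apply/existsP/existsP.
  case=> i /existsP[j /andP[ij Hij]]; have [lt_ij|le_ji] := ltnP i j.
    by exists (i, j); rewrite !inE /= lt_ij.
  by exists (j, i); rewrite !inE /= -cols_sym Hij andbT ltn_neqAle le_ji eq_sym ij.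
case=> -[i j] /andP[pP Hp]; exists i; apply/existsP; exists j.
by rewrite inE in Hp; rewrite Hp andbT (pair_neq pP).
Qed.

Lemma L11_nrows (M : mat) : L11 M = (0 < nrows M)%N.
Proof. by rewrite L11_trmx R11_ncols nrows_trmx. Qed.

Lemma ncols_square (M : mat) : ncols M * ncols M = ncols M + ncols2 M.
Proof. exact: count_square. Qed.

Lemma nrows_square (M : mat) : nrows M * nrows M = nrows M + nrows2 M.
Proof. exact: count_square. Qed.

Lemma sum_ncols : \sum_M ncols M = \sum_(p in pairs) #|colev p|.
Proof. by rewrite exchange_big; apply: eq_bigr => p _; apply: sum_indicator. Qed.

Lemma sum_ncols2 :
  \sum_M ncols2 M = \sum_(p in pairs) \sum_(q in pairs :\ p) #|colev p :&: colev q|.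
Proof.
rewrite exchange_big; apply: eq_bigr => p _; rewrite exchange_big.
by apply: eq_bigr => q _; rewrite -sum_indicator; apply: eq_bigr => M _; rewrite in_setI.
Qed.

Lemma sum_ncols_nrows :
  \sum_M ncols M * nrows M = \sum_(p in pairs) \sum_(r in pairs) #|colev p :&: rowev r|.
Proof.
under eq_bigr do rewrite big_distrl /=.
rewrite exchange_big; apply: eq_bigr => p _; under eq_bigr do rewrite big_distrr /=.
rewrite exchange_big; apply: eq_bigr => r _; rewrite -sum_indicator.
by apply: eq_bigr => M _; rewrite in_setI mulnb.
Qed.

Lemma sum_ncols2_nrows : \sum_M ncols2 M * nrows M =
  \sum_(p in pairs) \sum_(q in pairs :\ p) \sum_(r in pairs) #|colev p :&: colev q :&: rowev r|.
Proof.
under eq_bigr do rewrite big_distrl /=.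
rewrite exchange_big; apply: eq_bigr => p _; under eq_bigr do rewrite big_distrl /=.
rewrite exchange_big; apply: eq_bigr => q _; under eq_bigr do rewrite big_distrr /=.
rewrite exchange_big; apply: eq_bigr => r _; rewrite -sum_indicator.
by apply: eq_bigr => M _; rewrite !in_setI mulnb.
Qed.

Lemma sum_nrows2_ncols : \sum_M nrows2 M * ncols M = \sum_M ncols2 M * nrows M.
Proof.
rewrite (reindex_inj (@trmx_inj _ n n)) /=.
by apply: eq_bigr => M _; rewrite nrows2_trmx nrows_trmx trmxK mulnC.
Qed.

Lemma card_pairs_rest p : p \in pairs -> #|pairs :\ p| = (#|pairs| - 1)%N.
Proof. by move=> pP; rewrite [#|pairs|](cardsD1 p) pP add1n subn1. Qed.

Lemma sum_ncols_ge : (#|pairs| * (2 * 2 ^ (n * n)) <= (\sum_M ncols M) * 2 ^ n)%N.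
Proof.
by rewrite sum_ncols big_distrl -sum_nat_const; apply: leq_sum => p; apply: card_colev_ge.
Qed.

Lemma sum_ncols2_le : ((\sum_M ncols2 M) * (2 ^ n * 2 ^ n)
  <= #|pairs| * ((#|pairs| - 1) * (4 * 2 ^ (n * n))))%N.
Proof.
rewrite sum_ncols2 big_distrl -sum_nat_const; apply: leq_sum => p pP.
rewrite big_distrl -(card_pairs_rest pP) -sum_nat_const; apply: leq_sum => q.
by rewrite in_setD1 => /andP[qp qP]; apply: card_colev2_le; rewrite // eq_sym.
Qed.

Lemma sum_ncols_nrows_eq : ((\sum_M ncols M * nrows M) * (2 ^ n * 2 ^ n)
  = #|pairs| * (#|pairs| * (8 * 2 ^ (n * n))))%N.
Proof.
rewrite sum_ncols_nrows big_distrl -sum_nat_const; apply: eq_bigr => p pP.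
by rewrite big_distrl -sum_nat_const; apply: eq_bigr => r rP; apply: card_colev_rowev.
Qed.

Lemma sum_ncols2_nrows_le : ((\sum_M ncols2 M * nrows M) * (2 ^ n * 2 ^ n * 2 ^ n)
  <= #|pairs| * ((#|pairs| - 1) * (#|pairs| * (32 * 2 ^ (n * n)))))%N.
Proof.
rewrite sum_ncols2_nrows big_distrl -sum_nat_const; apply: leq_sum => p pP.
rewrite big_distrl -(card_pairs_rest pP) -sum_nat_const; apply: leq_sum => q.
rewrite in_setD1 => /andP[qp qP]; rewrite big_distrl -sum_nat_const.
by apply: leq_sum => r rP; apply: card_colev2_rowev_le; rewrite // eq_sym.
Qed.

Lemma bonferroni_R11 :
  (2 * (\sum_M ncols M) <= 2 * #|[set M : mat | R11 M]| + \sum_M ncols2 M)%N.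
Proof.
rewrite -sum_indicator !big_distrr -big_split; apply: leq_sum => M _.
by rewrite inE R11_ncols; apply: bonferroni_union; apply: ncols_square.
Qed.

Lemma bonferroni_R11_L11 :
  let y := #|[set M : mat | R11 M && L11 M]| in
  (y <= \sum_M ncols M * nrows M)%N /\
  (\sum_M ncols M * nrows M <= y + \sum_M ncols2 M * nrows M)%N.
Proof.
rewrite -sum_indicator; split.
  by apply: leq_sum => M _; rewrite inE R11_ncols L11_nrows indicator_le_mul.
rewrite -(leq_pmul2l (isT : (0 < 2)%N)) mulnDr.
have -> : (2 * \sum_M ncols2 M * nrows M
          = \sum_M ncols2 M * nrows M + \sum_M nrows2 M * ncols M)%N.
  by rewrite sum_nrows2_ncols; lia.
rewrite !big_distrr -!big_split; apply: leq_sum => M _ /=.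
rewrite inE R11_ncols L11_nrows addnA.
exact: bonferroni_intersection (ncols_square M) (nrows_square M).
Qed.

Lemma card_R11_notL11_ge :
  (2 * #|pairs| * 2 ^ (n * n) * 2 ^ n + 4 * #|pairs| * 2 ^ (n * n)
   <= #|[set M : mat | R11 M && ~~ L11 M]| * (2 ^ n * 2 ^ n)
      + 12 * #|pairs| * #|pairs| * 2 ^ (n * n))%N.
Proof.
have [hy _] := bonferroni_R11_L11.
apply: (first_order_arith sum_ncols_ge sum_ncols2_le sum_ncols_nrows_eq bonferroni_R11 hy).
exact: card_split.
Qed.

Lemma card_R11_L11_bounds :
  let y := #|[set M : mat | R11 M && L11 M]| in
  (y * (2 ^ n * 2 ^ n) <= 8 * #|pairs| * #|pairs| * 2 ^ (n * n))%N /\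
  (8 * #|pairs| * #|pairs| * 2 ^ (n * n) * 2 ^ n
   <= y * (2 ^ n * 2 ^ n * 2 ^ n) + 32 * #|pairs| * #|pairs| * #|pairs| * 2 ^ (n * n))%N.
Proof.
have [hy hSAB] := bonferroni_R11_L11; split.
  have := leq_mul hy (leqnn (2 ^ n * 2 ^ n)); rewrite sum_ncols_nrows_eq.
  by rewrite [X in (_ <= X)%N -> _](_ : _ = 8 * #|pairs| * #|pairs| * 2 ^ (n * n))%N //; ring.
exact: second_order_arith hSAB sum_ncols2_nrows_le sum_ncols_nrows_eq.
Qed.

End PairEvents.

Local Open Scope ring_scope.

Lemma first_order_rat (C N Y z : nat) : (0 < N)%N -> (0 < Y)%N ->
  (2 * C * N * Y + 4 * C * N <= z * (Y * Y) + 12 * C * C * N)%N ->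
  2 * C%:R * (1 / Y%:R) - (12 * C%:R ^+ 2 - 4 * C%:R) * (1 / Y%:R) ^+ 2
   <= z%:R / N%:R :> rat.
Proof.
move=> N_gt0 Y_gt0; rewrite -(ler_nat rat) !natrD !natrM => key.
have N0 : 0 < N%:R :> rat by rewrite ltr0n.
have Y0 : 0 < Y%:R :> rat by rewrite ltr0n.
rewrite ler_pdivlMr //.
have -> : (2 * C%:R * (1 / Y%:R) - (12 * C%:R ^+ 2 - 4 * C%:R) * (1 / Y%:R) ^+ 2) * N%:R
  = (2 * C%:R * N%:R * Y%:R + 4 * C%:R * N%:R - 12 * C%:R * C%:R * N%:R) / (Y%:R * Y%:R) :> rat.
  by field; rewrite gt_eqF.
by rewrite ler_pdivrMr ?mulr_gt0 //; lra.
Qed.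

Lemma second_order_rat (C N Y y n : nat) : (0 < N)%N -> (0 < Y)%N -> (C <= n * n)%N ->
  (y * (Y * Y) <= 8 * C * C * N)%N ->
  (8 * C * C * N * Y <= y * (Y * Y * Y) + 32 * C * C * C * N)%N ->
  `| 8 * C%:R ^+ 2 * (1 / Y%:R) ^+ 2 - y%:R / N%:R | <= 32 * n%:R ^+ 6 * (1 / Y%:R) ^+ 3 :> rat.
Proof.
move=> N_gt0 Y_gt0 Cn hy hy3.
have C3 : C%:R * C%:R * C%:R <= n%:R ^+ 6 :> rat.
  rewrite -natrX -!natrM ler_nat.
  by rewrite (_ : n ^ 6 = (n * n) * (n * n) * (n * n))%N ?leq_mul //; ring.
move: hy hy3; rewrite -!(ler_nat rat) !natrD !natrM => hy hy3.
have N0 : 0 < N%:R :> rat by rewrite ltr0n.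
have Y0 : 0 < Y%:R :> rat by rewrite ltr0n.
set c := C%:R in hy hy3 C3 *; set NN := N%:R in hy hy3 N0 *.
set YY := Y%:R in hy hy3 Y0 *; set yy := y%:R in hy hy3 *; set m := n%:R ^+ 6 in C3 *.
have -> : 8 * c ^+ 2 * (1 / YY) ^+ 2 - yy / NN
    = ((8 * c * c * NN - yy * YY * YY) * YY) / (NN * YY * YY * YY).
  by field; rewrite !gt_eqF.
have -> : 32 * m * (1 / YY) ^+ 3 = (32 * m * NN) / (NN * YY * YY * YY).
  by field; rewrite !gt_eqF.
have den0 : 0 < NN * YY * YY * YY by rewrite !mulr_gt0.
rewrite ger0_norm; last first.
  apply: divr_ge0 (ltW den0); apply: mulr_ge0 (ltW Y0).
  by rewrite subr_ge0 -mulrA.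
rewrite ler_pM2r; last by rewrite invr_gt0.
have pos32 : 0 < 32 :> rat by rewrite ltr0n.
apply: le_trans (_ : 32 * (c * c * c) * NN <= _); last by rewrite (ler_pM2r N0) (ler_pM2l pos32).
have -> : (8 * c * c * NN - yy * YY * YY) * YY = 8 * c * c * NN * YY - yy * (YY * YY * YY) by ring.
by rewrite lerBlDr; lra.
Qed.

Lemma exp_half (n : nat) : (1 / 2 : rat) ^+ n = 1 / (2 ^ n)%:R.
Proof. by rewrite expr_div_n expr1n natrX. Qed.

Lemma exp_half_pow (n k : nat) : (1 / (2 ^ k)%:R : rat) ^+ n = (1 / (2 ^ n)%:R) ^+ k.
Proof. by rewrite -!exp_half -!exprM mulnC. Qed.

Theorem mainTheorem13 :
  (forall n : nat, (2 <= n)%N ->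
     2 * ('C(n, 2))%:R * (1 / 2 : rat) ^+ n
       - (12 * ('C(n, 2))%:R ^+ 2 - 4 * ('C(n, 2))%:R) * (1 / 4 : rat) ^+ n
     <= prob (fun M : 'M[bool]_n => R11 M && ~~ L11 M)) /\
  (exists K : rat, exists N : nat, forall n : nat, (N <= n)%N ->
     `| prob (fun M : 'M[bool]_n => R11 M && ~~ L11 M)
        - (prob (fun M : 'M[bool]_n => R11 M)
           - 8 * ('C(n, 2))%:R ^+ 2 * (1 / 4 : rat) ^+ n) |
     <= K * (n%:R ^+ 6) * (1 / 8 : rat) ^+ n).
Proof.
have exp_quarter n : (1 / 4 : rat) ^+ n = (1 / (2 ^ n)%:R) ^+ 2 by rewrite -exp_half_pow.
have exp_eighth n : (1 / 8 : rat) ^+ n = (1 / (2 ^ n)%:R) ^+ 3 by rewrite -exp_half_pow.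
split=> [n _ | ].
  rewrite -card_increasing_pairs /prob exp_half exp_quarter.
  by apply: first_order_rat (card_R11_notL11_ge n); rewrite expn_gt0.
exists 32, 0%N => n _; have [hy hy3] := card_R11_L11_bounds n.
rewrite -card_increasing_pairs /prob exp_quarter exp_eighth.
rewrite (card_split (fun M : 'M[bool]_n => R11 M) (@L11 n)) natrD.
set y := #|[set M | R11 M && L11 M]|.
rewrite [X in `|X|](_ : _ = 8 * #|pairs n|%:R ^+ 2 * (1 / (2 ^ n)%:R) ^+ 2
                           - y%:R / (2 ^ (n * n))%:R); last by ring.
apply: second_order_rat hy hy3; rewrite ?expn_gt0 //.
by apply: leq_trans (max_card _) _; rewrite card_prod card_ord.
Qed.
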